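(* Let $\phi:\mathbb{R}\to\mathbb{R}$ be any bounded loss function. Fix a true label vector $\mathbf{y}\in\{-1,+1\}^q$ and a score vector $\mathbf t\in\mathbb R^q$. If $\tilde{\mathbf y}$ is generated from $\mathbf y$ by the class-conditional multi-label noise model, then $$\mathbb{E}_{\tilde{\mathbf y}\mid\mathbf y}\big[\tilde{\mathcal L}_r(\mathbf t,\tilde{\mathbf y})\big]=\mathcal L_r(\mathbf t,\mathbf y).$$
   Context: Fix $q\ge 2$, $[q]=\{1,\dots,q\}$, label vectors $\mathbf y\in\{-1,+1\}^q$. For each $j\in[q]$ there are noise rates $\rho^j_{+1},\rho^j_{-1}\in[0,1)$ with $\rho^j_{+1}+\rho^j_{-1}<1$. Class-conditional multi-label noise model: given $\mathbf y$, each coordinate is flipped independently, $\Pr(\tilde y_j=-y_j\mid\mathbf y)=\rho^j_{y_j}$, $\Pr(\tilde y_j=y_j\mid\mathbf y)=1-\rho^j_{y_j}$, flips for different $j$ independent. Let $\kappa_j=1/(1-\rho^j_{+1}-\rho^j_{-1})$ and $\kappa_{jk}=\kappa_j\kappa_k$. The pairwise surrogate is $$\mathcal L_r(\mathbf t,\mathbf y)=\sum_{1\le j<k\le q}\Big[\mathbb 1(y_j=+1,y_k=-1)\,\phi(t_j-t_k)+\mathbb 1(y_j=-1,y_k=+1)\,\phi(t_k-t_j)\Big]$$ (pairs with $y_j=y_k$ contribute $0$). For $j<k$, $s\in\mathbb R$, $a,b\in\{-1,+1\}$ define $\tilde\psi_{jk}(s;a,b)$ by $\tilde\psi_{jk}(s;+1,-1)=\kappa_{jk}[(1-\rho^j_{-1})(1-\rho^k_{+1})\phi(s)+\rho^j_{+1}\rho^k_{-1}\phi(-s)]$;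 $\tilde\psi_{jk}(s;-1,+1)=\kappa_{jk}[(1-\rho^j_{+1})(1-\rho^k_{-1})\phi(-s)+\rho^j_{-1}\rho^k_{+1}\phi(s)]$; $\tilde\psi_{jk}(s;+1,+1)=-\kappa_{jk}[\rho^j_{+1}(1-\rho^k_{-1})\phi(-s)+\rho^k_{+1}(1-\rho^j_{-1})\phi(s)]$; $\tilde\psi_{jk}(s;-1,-1)=-\kappa_{jk}[\rho^j_{-1}(1-\rho^k_{+1})\phi(s)+\rho^k_{-1}(1-\rho^j_{+1})\phi(-s)]$. The modified loss is $\tilde{\mathcal L}_r(\mathbf t,\tilde{\mathbf y})=\sum_{1\le j<k\le q}\tilde\psi_{jk}(t_j-t_k;\tilde y_j,\tilde y_k)$. *)

(* Labels in {-1,+1} are encoded as booleans: true = +1, false = -1. *)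
From mathcomp Require Import all_boot all_order all_algebra.
From mathcomp Require Import reals.
Set Implicit Arguments. Unset Strict Implicit. Unset Printing Implicit Defensive.
Import Order.TTheory GRing.Theory Num.Theory.
Local Open Scope ring_scope.

Section Defs.
Variables (R : realType) (q : nat).
(* rho j b = rho^j_{+1} if b = true, rho^j_{-1} if b = false *)
Variable rho : 'I_q -> bool -> R.
Variable phi : R -> R.

Definition kappa (j : 'I_q) : R := (1 - rho j true - rho j false)^-1.
Definition kappa2 (j k : 'I_q) : R := kappa j * kappa k.

Definition flip_prob (j : 'I_q) (b b' : bool) : R :=
  if b' == b then 1 - rho j b else rho j b.

Definition noise_prob (y yt : {ffun 'I_q -> bool}) : R :=
  \prod_(j < q) flip_prob j (y j) (yt j).

Definition Lr (t : 'I_q -> R) (y : {ffun 'I_q -> bool}) : R :=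
  \sum_(j < q) \sum_(k < q | (j < k)%N)
     ((if y j && ~~ y k then phi (t j - t k) else 0) +
      (if ~~ y j && y k then phi (t k - t j) else 0)).

Definition psi_tilde (j k : 'I_q) (s : R) (a b : bool) : R :=
  match a, b with
  | true, false => kappa2 j k * ((1 - rho j false) * (1 - rho k true) * phi s
                                 + rho j true * rho k false * phi (- s))
  | false, true => kappa2 j k * ((1 - rho j true) * (1 - rho k false) * phi (- s)
                                 + rho j false * rho k true * phi s)
  | true, true => - (kappa2 j k * (rho j true * (1 - rho k false) * phi (- s)
                                   + rho k true * (1 - rho j false) * phi s))
  | false, false => - (kappa2 j k * (rho j false * (1 - rho k true) * phi s
                                     + rho k false * (1 - rho j true) * phi (- s)))
  end.

Definition Lr_tilde (t : 'I_q -> R) (yt : {ffun 'I_q -> bool}) : R :=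
  \sum_(j < q) \sum_(k < q | (j < k)%N) psi_tilde j k (t j - t k) (yt j) (yt k).

Definition exp_noisy_loss (t : 'I_q -> R) (y : {ffun 'I_q -> bool}) : R :=
  \sum_(yt : {ffun 'I_q -> bool}) noise_prob y yt * Lr_tilde t yt.

End Defs.

From mathcomp Require Import all_boot all_order all_algebra.
From mathcomp Require Import reals.
From mathcomp Require Import ring lra.
Set Implicit Arguments. Unset Strict Implicit. Unset Printing Implicit Defensive.
Import Order.TTheory GRing.Theory Num.Theory.
Local Open Scope ring_scope.

(* The expected noisy loss is a double sum over pairs j < k of expectations
   E[ psi_tilde_jk(t_j - t_k; yt_j, yt_k) ].  The proof has two steps.
   1. Marginalisation: under a product distribution on {ffun 'I_q -> bool},
      the expectation of a quantity depending only on the coordinates j <> k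
      equals its expectation under the two-coordinate marginal, which is the
      product of the j-th and k-th factors.  We prove this for arbitrary
      per-coordinate weights summing to 1, over any commutative ring, by
      writing the quantity as a combination of point indicators of (yt j, yt k)
      and noticing that an indicator times the product weight is again a
      product weight ("pinned" at j and k), whose total mass factorises.
   2. Pairwise unbiasedness: averaging psi_tilde_jk over the four noisy
      outcomes of (y_j, y_k) returns the clean pairwise loss; this is a
      rational identity in the noise rates, valid when the kappa's are defined.
   The theorem follows by exchanging the sums and applying 1 then 2. *)

Section PairMarginal.
Variables (R : comNzRingType) (q : nat) (p : 'I_q -> bool -> R).
Hypothesis p_mass1 : forall l, p l true + p l false = 1.
Variables (j k : 'I_q).
Hypothesis neq_jk : j != k.

Definition pinned (a b : bool) (l : 'I_q) (c : bool) : R :=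
  if l == j then (c == a)%:R * p l c
  else if l == k then (c == b)%:R * p l c else p l c.

Lemma sum_pinned_prod (a b : bool) :
  \sum_(yt : {ffun 'I_q -> bool}) \prod_l pinned a b l (yt l) = p j a * p k b.
Proof.
rewrite -bigA_distr_bigA (bigD1 j) //= (bigD1 k) /=; last by rewrite eq_sym.
rewrite [X in _ * (_ * X)]big1 ?mulr1; last first.
  move=> l /andP[lj lk]; rewrite /pinned (negPf lj) (negPf lk) big_bool.
  exact: p_mass1.
rewrite /pinned eqxx eq_sym (negPf neq_jk) eqxx !big_bool.
by case: a; case: b => /=; rewrite ?mul1r ?mul0r ?addr0 ?add0r.
Qed.

Lemma pinned_prodE (a b : bool) (yt : {ffun 'I_q -> bool}) :
  \prod_l pinned a b l (yt l) =
  ((yt j == a) && (yt k == b))%:R * \prod_l p l (yt l).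
Proof.
rewrite (bigD1 j) //= (bigD1 k) /=; last by rewrite eq_sym.
rewrite [in RHS](bigD1 j) //= [in RHS](bigD1 k) /=; last by rewrite eq_sym.
rewrite [X in _ * (_ * X)](eq_bigr (fun l => p l (yt l))); last first.
  by move=> l /andP[lj lk]; rewrite /pinned (negPf lj) (negPf lk).
rewrite /pinned eqxx (eq_sym k j) (negPf neq_jk) eqxx.
by case: (yt j == a); case: (yt k == b) => /=; ring.
Qed.

Lemma pair_marginal (g : bool -> bool -> R) :
  \sum_(yt : {ffun 'I_q -> bool}) (\prod_l p l (yt l)) * g (yt j) (yt k) =
  \sum_a \sum_b p j a * p k b * g a b.
Proof.
have indicator_expansion (yt : {ffun 'I_q -> bool}) :
    (\prod_l p l (yt l)) * g (yt j) (yt k) =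
    \sum_a \sum_b g a b * \prod_l pinned a b l (yt l).
  rewrite !big_bool /= !pinned_prodE.
  by case: (yt j); case: (yt k) => /=; ring.
under eq_bigr => yt _ do rewrite indicator_expansion.
rewrite exchange_big; apply: eq_bigr => a _.
rewrite exchange_big; apply: eq_bigr => b _.
by rewrite -big_distrr /= sum_pinned_prod mulrC.
Qed.

End PairMarginal.

Section PairUnbiased.
Variables (R : realType) (q : nat) (rho : 'I_q -> bool -> R) (phi : R -> R).

Definition pair_loss (s : R) (a b : bool) : R :=
  (if a && ~~ b then phi s else 0) + (if ~~ a && b then phi (- s) else 0).

Lemma flip_prob_mass1 (l : 'I_q) (b : bool) :
  flip_prob rho l b true + flip_prob rho l b false = 1.
Proof. by rewrite /flip_prob; case: b => /=; ring. Qed.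

Lemma psi_tilde_unbiased (j k : 'I_q) (s : R) (a b : bool) :
  1 - rho j true - rho j false != 0 -> 1 - rho k true - rho k false != 0 ->
  \sum_a' \sum_b' flip_prob rho j a a' * flip_prob rho k b b' *
                  psi_tilde rho phi j k s a' b' = pair_loss s a b.
Proof.
move=> nz_j nz_k; rewrite !big_bool /flip_prob /psi_tilde /kappa2 /kappa.
by case: a; case: b; rewrite /pair_loss /=; field; rewrite nz_j nz_k.
Qed.

End PairUnbiased.

Theorem lemma2 (R : realType) (q : nat) (hq : (2 <= q)%N)
  (rho : 'I_q -> bool -> R)
  (hrho0 : forall j b, 0 <= rho j b) (hrho1 : forall j b, rho j b < 1)
  (hrhos : forall j, rho j true + rho j false < 1)
  (phi : R -> R) (hphi : exists M : R, forall s, `|phi s| <= M)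
  (y : {ffun 'I_q -> bool}) (t : 'I_q -> R) :
  exp_noisy_loss rho phi t y = Lr phi t y.
Proof.
have nz l : 1 - rho l true - rho l false != 0.
  by apply/eqP => E; have := hrhos l; lra.
rewrite /exp_noisy_loss /Lr.
under eq_bigr => yt _ do rewrite /Lr_tilde big_distrr.
rewrite exchange_big; apply: eq_bigr => j _.
under eq_bigr => yt _ do rewrite big_distrr.
rewrite exchange_big; apply: eq_bigr => k lt_jk.
have neq_jk : j != k by rewrite neq_ltn lt_jk.
pose noise l := flip_prob rho l (y l).
have noise_mass1 l : noise l true + noise l false = 1 by exact: flip_prob_mass1.
rewrite /noise_prob (@pair_marginal _ _ noise noise_mass1 j k neq_jk).
by rewrite psi_tilde_unbiased // /pair_loss opprB.
Qed.
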